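(* Let $k_+,k_-,t$ be integers with $0\leq k_-\leq k_+$, $k_++k_-\geq 1$ and $t>0$, and let $M\triangleq [-k_-,k_+]^*$. Let $\overline{\psi}(x)$ be the largest prime not larger than $x$, and let $p\triangleq\overline{\psi}(k_++k_-+1)$. Then for any integer $m>0$ there exists $S\subseteq (\mathbb{Z}_{p^m})^t$ with $|S|=t\cdot\frac{p^m-1}{p-1}$ such that $(\mathbb{Z}_{p^m})^t\leq M \diamond_t S$, and thereby a lattice covering of $\mathbb{Z}^n$, $n=|S|$, by $\mathcal{B}(n,t,k_+,k_-)$ with density \[\delta = \frac{ \sum_{i=0}^{t} \binom{n}{i} (k_++k_-)^i }{ ( n(p-1)/t+1 )^t }=\frac{(t(k_++k_-))^t}{t!(p-1)^t}+o(1),\] where $o(1)$ refers to $m\to\infty$ (equivalently $n\to\infty$) with $t,k_\pm$ fixed.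
   Context: $[a,b]^*=\{a,a+1,\dots,b\}\setminus\{0\}$. For a finite Abelian group $G$, a finite set $M\subseteq\mathbb{Z}\setminus\{0\}$ and $S=\{s_1,\dots,s_n\}\subseteq G$, we write $G\le M\diamond_t S$ if for every $g\in G$ there is $\mathbf{e}\in(M\cup\{0\})^n$ of Hamming weight at most $t$ with $g=\sum_i e_is_i$. $\mathcal{B}(n,t,k_+,k_-)=\{\mathbf{x}\in\mathbb{Z}^n : -k_-\le x_i\le k_+ \text{ for all } i,\ \mathrm{wt}(\mathbf{x})\le t\}$ ($\mathrm{wt}$ = Hamming weight). A lattice covering of $\mathbb{Z}^n$ by $\mathcal{B}$ is a lattice $\Lambda\subseteq\mathbb{Z}^n$ with $\bigcup_{\mathbf{v}\in\Lambda}(\mathbf{v}+\mathcal{B})=\mathbb{Z}^n$; its density is $|\mathcal{B}|/\mathrm{vol}(\Lambda)$, $\mathrm{vol}(\Lambda)=|\mathbb{Z}^n/\Lambda|$. *)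

From HB Require Import structures.
From mathcomp Require Import all_boot all_order all_algebra.
Set Implicit Arguments. Unset Strict Implicit. Unset Printing Implicit Defensive.
Import Order.TTheory GRing.Theory Num.Theory.
Local Open Scope ring_scope.

Definition intv_star (a b : int) : pred int := fun x => (a <= x <= b) && (x != 0).

(* G <= M <>_t S : every g is sum_{s in S} e_s s with e_s in M u {0},
   Hamming weight of e at most t.  (S is a finite set of group elements,
   indexed by itself.) *)
Definition diamond_cover (G : finZmodType) (M : pred int) (t : nat) (S : {set G}) :=
  forall g : G, exists e : G -> int,
    (forall s, s \in S -> (M (e s) || (e s == 0))) /\
    (#|[set s in S | e s != 0]| <= t)%N /\
    g = \sum_(s in S) (s *~ e s).

Definition wt n (x : 'rV[int]_n) : nat := #|[set i : 'I_n | x ord0 i != 0]|.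

Definition ballB (n t kp km : nat) : pred 'rV[int]_n :=
  fun x => [forall i, (- (km%:Z) <= x ord0 i <= kp%:Z)] && (wt x <= t)%N.

Arguments ballB : clear implicits.

Definition pcard (T : eqType) (P : T -> Prop) (c : nat) :=
  exists s : seq T, uniq s /\ (forall x, x \in s <-> P x) /\ size s = c.

Definition lat_index n (L : 'rV[int]_n -> Prop) (N : nat) :=
  exists reps : seq 'rV[int]_n,
    size reps = N /\
    (forall i j, (i < N)%N -> (j < N)%N -> L (nth 0 reps i - nth 0 reps j) -> i = j) /\
    (forall x, exists2 r, r \in reps & L (x - r)).

(* A lattice in Z^n: a subgroup of Z^n of finite index (full rank) *)
Definition is_lattice n (L : 'rV[int]_n -> Prop) :=
  L 0 /\ (forall x y, L x -> L y -> L (x - y)) /\ exists N, lat_index L N.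

Definition lattice_covering n (L : 'rV[int]_n -> Prop) (B : pred 'rV[int]_n) :=
  is_lattice L /\ forall x, exists v, L v /\ B (x - v).

Definition has_density n (L : 'rV[int]_n -> Prop) (B : pred 'rV[int]_n) (d : rat) :=
  exists cB N, pcard (fun x => B x) cB /\ lat_index L N /\ d = cB%:R / N%:R.

Definition psibar (x : nat) : nat := \max_(q < x.+1 | prime q) q.

From HB Require Import structures.
From mathcomp Require Import all_boot all_order all_algebra.
From mathcomp Require Import zify ring lra.
Import Order.TTheory GRing.Theory Num.Theory.

(* Write a nonzero x of Z_(p^m) as p^j u with u prime to p; its lowest nonzero
   base-p digit d(x) = u mod p is multiplicative under multiplication by integers
   prime to p.  Hence every nonzero x is a s with 0 < a < p and d(s) = 1, and as
   p <= k+ + k- + 1, a digit a > k+ may be traded for a - p in [-k-, -1].  So the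
   set S1 of elements of digit 1, of size (p^m - 1)/(p - 1), covers Z_(p^m) with
   weight one, and its copies on the t coordinate axes cover (Z_(p^m))^t with
   weight t.  The kernel of x |-> sum_i x_i s_i from Z^n onto (Z_(p^m))^t is then a
   lattice covering by the ball, of index p^(mt).  Counting the ball gives the
   density, and sum_(i <= t) C(n, i) k^i = (n k)^t / t! + O(n^(t-1)) its limit. *)

Set Implicit Arguments.
Unset Strict Implicit.
Unset Printing Implicit Defensive.

(* The lowest nonzero digit of [n] in base [p]; it is [0] for [n = 0]. *)
Definition low_digit p n := (n %/ p ^ logn p n) %% p.

Section LowDigit.

Variable p : nat.
Hypothesis p_pr : prime p.

Let coprime_p0 : coprime p 0 = false.
Proof. by rewrite prime_coprime ?dvdn0. Qed.

Lemma low_digit0 : low_digit p 0 = 0.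
Proof. by rewrite /low_digit div0n mod0n. Qed.

Lemma low_digit_pfactor u j : coprime p u -> low_digit p (u * p ^ j) = u %% p.
Proof.
move=> pu; rewrite /low_digit logn_Gauss // pfactorK // mulnK //.
by rewrite expn_gt0 prime_gt0.
Qed.

Lemma coprime_low_digit n : 0 < n -> coprime p (low_digit p n).
Proof.
move=> n_gt0; have [u pu ->] := pfactor_coprime p_pr n_gt0.
by rewrite low_digit_pfactor // coprime_modr.
Qed.

Lemma low_digit_ltn n : low_digit p n < p.
Proof. by rewrite ltn_mod prime_gt0. Qed.

Lemma low_digit_eq0 n : (low_digit p n == 0) = (n == 0).
Proof.
case: (posnP n) => [->|n_gt0]; first by rewrite low_digit0.
apply/negbTE; have := coprime_low_digit n_gt0.
by apply: contraTneq => ->; rewrite coprime_p0.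
Qed.

Lemma low_digit_mulm a m x : coprime p a -> x < p ^ m ->
  low_digit p ((a * x) %% p ^ m) = (a * low_digit p x) %% p.
Proof.
move=> pa x_lt; case: (posnP x) => [->|x_gt0].
  by rewrite muln0 mod0n low_digit0 muln0 mod0n.
have [u pu xE] := pfactor_coprime p_pr x_gt0; set j := logn p x in xE.
have j_lt_m : j < m.
  rewrite -(ltn_exp2l _ _ (prime_gt1 p_pr)); apply: leq_ltn_trans x_lt.
  by rewrite xE leq_pmull // lt0n; apply: contraTneq pu => ->; rewrite coprime_p0.
have pm_split : p ^ m = p ^ (m - j) * p ^ j by rewrite -expnD subnK // ltnW.
have dig_mod : (a * u) %% p ^ (m - j) %% p = (a * u) %% p.
  by rewrite modn_dvdm // -{1}(expn1 p) dvdn_exp2l // subn_gt0.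
rewrite xE mulnA pm_split -muln_modl low_digit_pfactor ?low_digit_pfactor //.
  by rewrite dig_mod modnMmr.
by rewrite -coprime_modr dig_mod coprime_modr coprimeMr pa.
Qed.

End LowDigit.

Lemma card_ffun_support (T R : finType) (y0 : R) j :
  #|[set f : {ffun T -> R} | #|[set i | f i != y0]| == j]| = 'C(#|T|, j) * #|R|.-1 ^ j.
Proof.
rewrite -sum1_card (partition_big (fun f : {ffun T -> R} => [set i | f i != y0])
   (fun D : {set T} => #|D| == j)) /=; last by move=> f; rewrite inE.
rewrite -card_draws -sum_nat_const.
apply: eq_big => [D | D /eqP D_j]; first by rewrite inE.
rewrite -(cardC1 y0) -D_j -(card_pffun_on y0) -[RHS]sum1_card.
apply: eq_bigl => f; rewrite inE.
apply/andP/pffun_onP => [[_ /eqP <-] | [supp_f im_f]].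
  split; first by apply/subsetP => x; rewrite !inE.
  by move=> y /imageP[x]; rewrite inE => fx ->; rewrite !inE.
suff -> : [set i | f i != y0] = D by rewrite eqxx.
apply/setP=> x; rewrite inE; apply/idP/idP => [fx | xD].
  by apply: (subsetP supp_f); rewrite inE.
by have := im_f (f x) (image_f f xD); rewrite !inE.
Qed.

Lemma card_le_sum_fibers (T : finType) (h : T -> nat) t :
  #|[set x | h x <= t]| = \sum_(j < t.+1) #|[set x | h x == j]|.
Proof.
elim: t => [|t IH]; first by rewrite big_ord1; apply: eq_card => x; rewrite !inE leqn0.
rewrite big_ord_recr /= -IH -(cardsID [set x | h x <= t] [set x | h x <= t.+1]).
by congr (_ + _); apply: eq_card => x; rewrite !inE; case: ltngtP => //; lia.
Qed.

Lemma leq_expn2r a b e : a <= b -> a ^ e <= b ^ e.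
Proof. by case: e => // e a_le_b; rewrite leq_exp2r. Qed.

Lemma ffact_leq_exp n j : n ^_ j <= n ^ j.
Proof.
rewrite ffact_prod -[j in n ^ j]card_ord -prod_nat_const.
by apply: leq_prod => i _; apply: leq_subr.
Qed.

Lemma exp_leq_ffact n j : (n - j) ^ j <= n ^_ j.
Proof.
rewrite ffact_prod -[j in _ ^ j]card_ord -prod_nat_const.
by apply: leq_prod => i _; apply: leq_sub2l; apply: ltnW.
Qed.

Lemma bin_leq_exp n i : 'C(n, i) <= n ^ i.
Proof. by apply: leq_trans (ffact_leq_exp n i); rewrite -bin_ffact leq_pmulr ?fact_gt0. Qed.

Lemma leq_expn_mean_value a b t : b <= a -> a ^ t <= b ^ t + t * (a - b) * a ^ t.-1.
Proof.
move=> b_le_a; rewrite -leq_subLR subn_exp (mulnC t) -mulnA leq_mul2l.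
rewrite -[t in t * _]card_ord -sum_nat_const leq_sum ?orbT // => i _.
have i_le : i <= t.-1 by have := ltn_ord i; lia.
by rewrite -{2}(subnK i_le) expnD leq_mul2l leq_expn2r ?orbT.
Qed.

Section BinomialSumBounds.

Variables t k p Q q : nat.
Hypotheses (t_gt0 : 0 < t) (k_gt0 : 0 < k) (p_gt1 : 1 < p).
Hypotheses (Q_def : Q * (p - 1) = q - 1) (p_le_q : p <= q).

Local Notation A := (\sum_(i < t.+1) 'C(t * Q, i) * k ^ i).

Let Q_gt0 : 0 < Q.
Proof. by case: Q Q_def => //; lia. Qed.

Let Q_le_q : Q <= q.
Proof. by apply: leq_trans (leq_pmulr Q (_ : 0 < p - 1)) _; lia. Qed.

Let top_term :
  'C(t * Q, t) * k ^ t * t`! * (p - 1) ^ t = (t * Q) ^_ t * k ^ t * (p - 1) ^ t.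
Proof. by rewrite -bin_ffact; ring. Qed.

Lemma binomial_sum_upper :
  A * t`! * (p - 1) ^ t <=
    (t * k) ^ t * q ^ t + t * (t * k) ^ t.-1 * t`! * (p - 1) ^ t * q ^ t.-1.
Proof.
have low_terms : \sum_(i < t) 'C(t * Q, i) * k ^ i <= \sum_(i < t) (t * k * q) ^ t.-1.
  apply: leq_sum => i _.
  apply: leq_trans (_ : (t * Q * k) ^ i <= _).
    by rewrite expnMn leq_mul2r bin_leq_exp orbT.
  apply: leq_trans (_ : (t * Q * k) ^ t.-1 <= _).
    by apply: leq_pexp2l; rewrite ?muln_gt0 ?t_gt0 ?Q_gt0 //; have := ltn_ord i; lia.
  by rewrite mulnAC leq_expn2r // leq_mul2l Q_le_q orbT.
rewrite sum_nat_const card_ord in low_terms.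
have top : (t * Q) ^_ t * k ^ t * (p - 1) ^ t <= (t * k) ^ t * q ^ t.
  apply: leq_trans (_ : (t * Q) ^ t * k ^ t * (p - 1) ^ t <= _).
    by rewrite !leq_mul2r ffact_leq_exp !orbT.
  rewrite -!expnMn leq_expn2r //.
  have -> : t * Q * k * (p - 1) = t * k * (q - 1) by rewrite -Q_def; ring.
  by rewrite leq_mul2l leq_subr orbT.
rewrite big_ord_recr /= !mulnDl top_term addnC leq_add //.
apply: leq_trans (leq_mul (leq_mul low_terms (leqnn _)) (leqnn _)) _.
by rewrite expnMn; apply: eq_leq; ring.
Qed.

Lemma binomial_sum_lower :
  (t * k) ^ t * q ^ t <= A * t`! * (p - 1) ^ t + (t * k) ^ t * t * p * q ^ t.-1.
Proof.
have := leq_expn_mean_value t (leq_subr p q); rewrite subKn // => q_split.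
apply: leq_trans (leq_mul (leqnn _) q_split) _.
rewrite mulnDr leq_add //; last by apply: eq_leq; ring.
have -> : q - p = (Q - 1) * (p - 1) by rewrite mulnBl mul1n Q_def; lia.
apply: leq_trans (_ : (t * Q) ^_ t * k ^ t * (p - 1) ^ t <= _); last first.
  by rewrite -top_term !leq_mul2r big_ord_recr leq_addl !orbT.
apply: leq_trans (_ : (t * Q - t) ^ t * k ^ t * (p - 1) ^ t <= _); last first.
  by rewrite !leq_mul2r exp_leq_ffact !orbT.
have -> : t * Q - t = t * (Q - 1) by rewrite mulnBr muln1.
by rewrite !expnMn; apply: eq_leq; ring.
Qed.

End BinomialSumBounds.

Lemma pred_exp_divnK p m : ((p ^ m - 1) %/ (p - 1) * (p - 1) = p ^ m - 1)%N.
Proof. by rewrite divnK // !subn1 dvdn_pred_predX. Qed.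

Lemma psibar_prime_le x : 1 < x -> prime (psibar x) /\ psibar x <= x.
Proof.
move=> x_gt1; have has_prime : 0 < #|[pred q : 'I_x.+1 | prime q]|.
  by apply/card_gt0P; exists (Ordinal (x_gt1 : 2 < x.+1)).
have [q q_pr max_q] := eq_bigmax_cond (fun q : 'I_x.+1 => nat_of_ord q) has_prime.
by rewrite /psibar max_q -ltnS ltn_ord; move: q_pr; rewrite inE.
Qed.

Local Open Scope ring_scope.

Section DigitOneSet.

Variables p m : nat.
Hypotheses (p_pr : prime p) (m_gt0 : (0 < m)%N).

Definition digit_one_set : {set 'Z_(p ^ m)} :=
  [set x : 'Z_(p ^ m) | low_digit p x == 1%N].

Let pm_gt1 : (1 < p ^ m)%N.
Proof. by rewrite -(expn0 p) ltn_exp2l ?prime_gt1. Qed.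

Let p_dvd_pm : (p %| p ^ m)%N.
Proof. by rewrite -{1}(expn1 p) dvdn_exp2l. Qed.

Lemma low_digit_Zp_mulrn (x : 'Z_(p ^ m)) a : coprime p a ->
  low_digit p (x *+ a) = (a * low_digit p x %% p)%N.
Proof.
move=> pa; rewrite -mulr_natl -[x in _ * x]natr_Zp -natrM val_Zp_nat //.
by rewrite low_digit_mulm // -{2}(Zp_cast pm_gt1) ltn_ord.
Qed.

Lemma digit_one_set_neq0 : 0 \notin digit_one_set.
Proof. by rewrite inE low_digit0. Qed.

Lemma Zp_low_digit_decomp (x : 'Z_(p ^ m)) a :
  x != 0 -> (a %% p)%N = low_digit p x ->
  exists2 s, s \in digit_one_set & x = s *+ a.
Proof.
move=> x_neq0 a_dig.
have pa : coprime p a.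
  by rewrite -coprime_modr a_dig coprime_low_digit // lt0n.
have a_unit : (a%:R : 'Z_(p ^ m)) \is a GRing.unit by rewrite unitZpE // coprime_pexpl.
set b := val (a%:R^-1 : 'Z_(p ^ m)).
have ab : (a * b %% p = 1)%N.
  have : nat_of_ord (a%:R * b%:R : 'Z_(p ^ m)) = 1%N.
    by rewrite natr_Zp mulrV // -(Zp_cast pm_gt1).
  rewrite -natrM val_Zp_nat // => ab1.
  by rewrite -(modn_dvdm _ p_dvd_pm) ab1 modn_small ?prime_gt1.
have pb : coprime p b.
  by move: (coprimen1 p); rewrite -ab coprime_modr coprimeMr => /andP[].
have xb_a : x *+ b *+ a = x.
  by rewrite -mulrnA -mulr_natr natrM natr_Zp mulVr ?mulr1.
exists (x *+ b) => //.
by rewrite inE low_digit_Zp_mulrn // -a_dig modnMmr mulnC ab.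
Qed.

Lemma card_low_digit_class d : (0 < d < p)%N ->
  #|[set x : 'Z_(p ^ m) | low_digit p x == d]| = #|digit_one_set|.
Proof.
case/andP=> d_gt0 d_lt_p.
have pd : coprime p d by rewrite prime_coprime // gtnNdvd.
have -> : [set x : 'Z_(p ^ m) | low_digit p x == d] = (fun s => s *+ d) @: digit_one_set.
  apply/setP=> x; rewrite inE; apply/eqP/imsetP => [x_d | [s]].
    have x_neq0 : x != 0 by apply: contraTneq d_gt0 => x0; rewrite -x_d x0 low_digit0.
    by apply: Zp_low_digit_decomp; rewrite // modn_small.
  by rewrite inE => /eqP s1 ->; rewrite low_digit_Zp_mulrn // s1 muln1 modn_small.
apply: card_imset => s1 s2; rewrite -mulr_natr -[s2 *+ _]mulr_natr; apply: mulIr.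
by rewrite unitZpE // coprime_pexpl.
Qed.

Lemma card_digit_one_set : ((p - 1) * #|digit_one_set| = p ^ m - 1)%N.
Proof.
have p_gt0 := prime_gt0 p_pr.
have card_Z : #|'Z_(p ^ m)| = (p ^ m)%N by rewrite card_ord Zp_cast.
have card_sum :
    #|'Z_(p ^ m)| = (\sum_(d < p) #|[set x : 'Z_(p ^ m) | low_digit p x == d]|)%N.
  pose digit (x : 'Z_(p ^ m)) := Ordinal (low_digit_ltn p_pr x).
  rewrite -sum1_card (partition_big digit predT) //=.
  by apply: eq_bigr => d _; rewrite -sum1_card; apply: eq_bigl => x; rewrite inE.
rewrite -[in RHS]card_Z card_sum (bigD1 (Ordinal p_gt0)) //=.
have -> : [set x : 'Z_(p ^ m) | low_digit p x == 0%N] = [set 0].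
  by apply/setP=> x; rewrite !inE low_digit_eq0.
rewrite cards1 addKn (eq_bigr (fun=> #|digit_one_set|)) => [|d d_neq0].
  by rewrite sum_nat_const cardC1 card_ord subn1.
by rewrite card_low_digit_class // lt0n ltn_ord andbT.
Qed.

Lemma Zp_intv_star_decomp kp km (x : 'Z_(p ^ m)) :
  (p <= kp + km + 1)%N -> x != 0 ->
  exists c s, [/\ intv_star (- km%:Z) kp%:Z c, s \in digit_one_set & x = s *~ c].
Proof.
move=> p_le x_neq0; set d := low_digit p x.
have d_gt0 : (0 < d)%N by rewrite lt0n low_digit_eq0.
have d_lt_p : (d < p)%N := low_digit_ltn p_pr x.
have p_le_pm : (p <= p ^ m)%N := dvdn_leq (ltnW pm_gt1) p_dvd_pm.
case: (leqP d kp) => [d_le_kp | kp_lt_d].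
  have [s s1 ->] := Zp_low_digit_decomp x_neq0 (modn_small d_lt_p).
  by exists d%:Z, s; split; rewrite ?pmulrn // /intv_star; lia.
(* [d + (p ^ m - p)] is [d] modulo [p] and acts on [Z_(p ^ m)] as [d - p]. *)
have a_dig : ((d + (p ^ m - p)) %% p)%N = d.
  have /dvdnP[k ->] : (p %| p ^ m - p)%N by rewrite dvdn_sub.
  by rewrite addnC modnMDl modn_small.
have [s s1 ->] := Zp_low_digit_decomp x_neq0 a_dig.
exists (d%:Z - p%:Z), s; split => //; first by rewrite /intv_star; lia.
rewrite mulrnDr mulrnBr // -[s *+ (p ^ m)]mulr_natr pchar_Zp // mulr0 sub0r.
by rewrite mulrzBl_nat -!pmulrn.
Qed.

End DigitOneSet.

Lemma diamond_cover_of_short_sums (G : finZmodType) (M : pred int) t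
    (S : {set G}) :
  (forall g : G, exists (A : {set 'I_t}) (f : 'I_t -> G) (c : 'I_t -> int),
     [/\ {in A &, injective f}, {in A, forall i, f i \in S /\ M (c i)}
       & g = \sum_(i in A) f i *~ c i]) ->
  diamond_cover M t S.
Proof.
move=> slots g; have [A [f [c [f_inj fAS ->]]]] := slots g.
pose e s := if [pick i in A | f i == s] is Some i then c i else 0.
have e_f i : i \in A -> e (f i) = c i.
  move=> iA; rewrite /e; case: pickP => [j /andP[jA /eqP /f_inj-> //] | /(_ i)].
  by rewrite iA eqxx.
have e_out s : s \notin f @: A -> e s = 0.
  move=> sA; rewrite /e; case: pickP => // j /andP[jA /eqP fj].
  by rewrite -fj imset_f in sA.
have fA_sub : f @: A \subset S.
  by apply/subsetP=> _ /imsetP[i iA ->]; have [] := fAS i iA.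
exists e; split; [|split].
- move=> s _; case: (boolP (s \in f @: A)) => [/imsetP[i iA ->] | /e_out->].
    by rewrite e_f //; have [_ ->] := fAS i iA.
  by rewrite eqxx orbT.
- have fA_le_t : (#|f @: A| <= t)%N.
    apply: leq_trans (leq_imset_card f A) _.
    by apply: leq_trans (max_card _) _; rewrite card_ord.
  apply: leq_trans fA_le_t; apply/subset_leq_card/subsetP=> s; rewrite inE => /andP[_].
  by apply: contraNT => /e_out->; rewrite eqxx.
- rewrite (big_setID (f @: A)) /= (setIidPr fA_sub) [X in _ + X]big1 ?addr0.
    by rewrite big_imset //=; apply: eq_bigr => i iA; rewrite e_f.
  by move=> s; rewrite inE => /andP[/e_out-> _]; rewrite mulr0z.
Qed.

Section AxesSet.

Variables (R : finNzRingType) (t : nat).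
Implicit Types (D : {set R}) (M : pred int).

Definition axes_set D : {set 'rV[R]_t} :=
  [set z.2 *: delta_mx 0 z.1 | z in setX [set: 'I_t] D].

Lemma scale_delta_inj (i j : 'I_t) (x y : R) : x != 0 ->
  x *: delta_mx 0 i = y *: delta_mx 0 j :> 'rV_t -> i = j /\ x = y.
Proof.
move=> x_neq0 /rowP /(_ i); rewrite !mxE !eqxx mulr1.
by case: eqP => [-> /= | _]; rewrite ?mulr1 ?mulr0 // => x0; rewrite x0 eqxx in x_neq0.
Qed.

Lemma card_axes_set D : 0 \notin D -> #|axes_set D| = (t * #|D|)%N.
Proof.
move=> D_neq0; rewrite card_in_imset ?cardsX ?cardsT ?card_ord //.
move=> [i x] [j y]; rewrite inE /= => /andP[_ xD] _ /scale_delta_inj[|-> ->] //.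
by apply: contraNneq D_neq0 => <-.
Qed.

Lemma diamond_cover_axes_set M D :
  (forall x : R, x != 0 -> exists c s, [/\ M c, s \in D & x = s *~ c]) ->
  diamond_cover M t (axes_set D).
Proof.
move=> decomp; apply: diamond_cover_of_short_sums => g.
have /fin_all_exists[cs csP] : forall i, exists cs : int * R, g 0 i != 0 ->
    [/\ M cs.1, cs.2 \in D & g 0 i = cs.2 *~ cs.1].
  move=> i; case: (eqVneq (g 0 i) 0) => [_ | /decomp[c [s cs_i]]].
    by exists (0, 0).
  by exists (c, s).
pose A := [set i | g 0 i != 0].
have s_neq0 i : i \in A -> (cs i).2 != 0.
  rewrite inE => gi_neq0; have [_ _ gi] := csP i gi_neq0.
  by apply: contraNneq gi_neq0 => s0; rewrite gi s0 mul0rz.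
exists A, (fun i => (cs i).2 *: delta_mx 0 i), (fun i => (cs i).1); split.
- by move=> i j iA _ /(scale_delta_inj (s_neq0 i iA))[].
- move=> i; rewrite inE => /csP[Mc sD _].
  by split=> //; apply/imsetP; exists (i, (cs i).2); rewrite ?inE.
rewrite [LHS]row_sum_delta (bigID (mem A)) /= [X in _ + X]big1 ?addr0.
  by apply: eq_bigr => i; rewrite inE => /csP[_ _ ->]; rewrite scalerMzl.
by move=> i; rewrite inE negbK => /eqP->; rewrite scale0r.
Qed.

End AxesSet.

Section KernelLattice.

Variables (G : finZmodType) (n : nat) (phi : 'rV[int]_n -> G).
Hypothesis phiB : {morph phi : x y / x - y}.

Lemma lat_index_kernel : (forall g, exists x, phi x = g) ->
  lat_index (fun x => phi x = 0) #|G|.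
Proof.
move=> phi_onto; have rep_ex g : exists x, phi x == g.
  by have [x <-] := phi_onto g; exists x.
pose rep g := xchoose (rep_ex g).
have repK g : phi (rep g) = g by apply/eqP/(xchooseP (rep_ex g)).
exists [seq rep g | g <- enum G]; split; first by rewrite size_map -cardE.
split=> [i j i_lt j_lt | x].
  rewrite phiB => /eqP; rewrite subr_eq0 !(nth_map 0) -?enumT -?cardT //.
  by rewrite !repK nth_uniq -?cardT ?enum_uniq // => /eqP.
by exists (rep (phi x)); rewrite ?map_f ?mem_enum // phiB repK subrr.
Qed.

Lemma lattice_covering_kernel (B : pred 'rV[int]_n) :
  (forall g, exists2 x, B x & phi x = g) -> lattice_covering (fun x => phi x = 0) B.
Proof.
move=> phi_onto_B; have phi0 : phi 0 = 0 by rewrite -(subrr 0) phiB subrr.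
split.
  split=> //; split=> [x y phix phiy | ]; first by rewrite phiB phix phiy subrr.
  exists #|G|; apply: lat_index_kernel => g.
  by have [x _ <-] := phi_onto_B g; exists x.
have rep_ex g : exists x, B x && (phi x == g).
  by have [x Bx <-] := phi_onto_B g; exists x; rewrite Bx eqxx.
move=> x; have /andP[Br /eqP phi_r] := xchooseP (rep_ex (phi x)).
set r := xchoose _ in Br phi_r.
by exists (x - r); rewrite phiB phi_r subrr opprB addrC subrK.
Qed.

End KernelLattice.

Definition lincomb (G : finZmodType) (S : {set G}) (x : 'rV[int]_#|S|) : G :=
  \sum_i enum_val i *~ x 0 i.
Arguments lincomb {G} S x.

Lemma lincombB (G : finZmodType) (S : {set G}) : {morph lincomb S : x y / x - y}.
Proof.
by move=> x y; rewrite /lincomb -sumrB; apply: eq_bigr => i _; rewrite !mxE mulrzBr.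
Qed.

Lemma diamond_cover_lincomb_onto (G : finZmodType) (M : pred int) t kp km
    (S : {set G}) :
  (forall c, M c -> - km%:Z <= c <= kp%:Z) -> diamond_cover M t S ->
  forall g, exists2 x, ballB #|S| t kp km x & lincomb S x = g.
Proof.
move=> M_bounded cover g; have [e [eM [e_wt ->]]] := cover g.
exists (\row_i e (enum_val i)); last first.
  by rewrite /lincomb [RHS]big_enum_val; apply: eq_bigr => i _; rewrite mxE.
apply/andP; split.
  apply/forallP=> i; rewrite mxE.
  by have /orP[/M_bounded // | /eqP->] := eM _ (enum_valP i); rewrite oppr_le0.
apply: leq_trans e_wt; rewrite /wt.
have -> : [set s in S | e s != 0] =
    enum_val @: [set i : 'I_#|S| | (\row_i e (enum_val i) : 'rV_#|S|) 0 i != 0].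
  apply/setP=> s; rewrite !inE; apply/andP/imsetP => [[sS es] | [i]].
    by exists (enum_rank_in sS s); rewrite ?inE ?mxE enum_rankK_in.
  by rewrite inE mxE => ei ->; rewrite enum_valP.
by rewrite card_imset //; apply: enum_val_inj.
Qed.

Lemma diamond_cover_lattice (G : finZmodType) (M : pred int) t kp km
    (S : {set G}) n :
  #|S| = n -> (forall c, M c -> - km%:Z <= c <= kp%:Z) -> diamond_cover M t S ->
  exists L : 'rV[int]_n -> Prop,
    lattice_covering L (ballB n t kp km) /\ lat_index L #|G|.
Proof.
move=> <- M_bounded cover; exists (fun x => lincomb S x = 0).
have onto := diamond_cover_lincomb_onto M_bounded cover.
split; first by apply: lattice_covering_kernel => //; apply: lincombB.
by apply: lat_index_kernel (@lincombB G S) _ => g; have [x _ <-] := onto g; exists x.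
Qed.

Lemma pcard_ballB n t kp km :
  pcard (fun x => ballB n t kp km x) (\sum_(i < t.+1) 'C(n, i) * (kp + km) ^ i)%N.
Proof.
set k := (kp + km)%N.
pose z : 'I_k.+1 := inord km.
have z_km : nat_of_ord z = km by rewrite inordK // ltnS leq_addl.
pose enc (f : {ffun 'I_n -> 'I_k.+1}) : 'rV[int]_n := \row_i ((f i)%:Z - km%:Z).
have enc_inj : injective enc.
  move=> f g /rowP enc_fg; apply/ffunP => i.
  by have := enc_fg i; rewrite !mxE => /addIr[] /val_inj.
have wt_enc f : wt (enc f) = #|[set i | f i != z]|.
  apply: eq_card => i; rewrite !inE mxE subr_eq0 eqz_nat -z_km.
  by congr negb; apply/eqP/eqP => [/val_inj | ->].
pose P := [set f : {ffun 'I_n -> 'I_k.+1} | (#|[set i | f i != z]| <= t)%N].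
exists [seq enc f | f <- enum P]; split; first by rewrite map_inj_uniq // enum_uniq.
split; last first.
  rewrite size_map -cardE /P card_le_sum_fibers; apply: eq_bigr => j _.
  by rewrite card_ffun_support !card_ord.
move=> x; split.
  move=> /mapP[f]; rewrite mem_enum inE => f_t ->.
  rewrite /ballB wt_enc f_t andbT; apply/forallP => i; rewrite mxE.
  have := ltn_ord (f i); rewrite /k.
  by move=> f_lt; rewrite lerBrDr addNr lerBlDr -PoszD lez_nat.
rewrite /ballB => /andP[/forallP x_bd x_wt].
pose f := [ffun i : 'I_n => inord (absz (x ord0 i + km%:Z)) : 'I_k.+1].
have enc_f : enc f = x.
  apply/rowP => i; rewrite !mxE ffunE; move: (x ord0 i) (x_bd i) => y y_bd.
  by rewrite inordK; lia.
by apply/mapP; exists f; rewrite // mem_enum inE -wt_enc enc_f.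
Qed.

Lemma dist_ratio_le (R : realFieldType) (a b D q t E : nat) :
  (0 < D)%N -> (0 < q)%N -> (0 < t)%N ->
  (a * D <= b * q ^ t + E * q ^ t.-1)%N -> (b * q ^ t <= a * D + E * q ^ t.-1)%N ->
  `|a%:R / (q ^ t)%:R - b%:R / D%:R| <= E%:R / q%:R :> R.
Proof.
move=> D_gt0 q_gt0 t_gt0 upper lower.
have qt_gt0 : (0 < q ^ t)%N by rewrite expn_gt0 q_gt0.
have num_le : `|(a * D)%:R - (b * q ^ t)%:R| <= (E * q ^ t.-1)%:R :> R.
  move: upper lower; rewrite -!(ler_nat R) !natrD => upper lower.
  by rewrite ler_norml; apply/andP; split; lra.
have -> : a%:R / (q ^ t)%:R - b%:R / D%:R =
    ((a * D)%:R - (b * q ^ t)%:R) / (q ^ t * D)%:R :> R.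
  by rewrite !natrM; field; rewrite !pnatr_eq0 -!lt0n qt_gt0 D_gt0.
rewrite normrM normfV normr_nat ler_pdivrMr ?ltr0n ?muln_gt0 ?qt_gt0 //.
apply: le_trans num_le _.
have -> : E%:R / q%:R * (q ^ t * D)%:R = (E * q ^ t.-1)%:R * D%:R :> R.
  by rewrite -(prednK t_gt0) expnS /= !natrM; field; rewrite pnatr_eq0 -lt0n.
by rewrite ler_peMr ?ler0n // ler1n.
Qed.

Lemma binomial_sum_ratio_limit t k p (eps : rat) :
  (0 < t)%N -> (0 < k)%N -> (1 < p)%N -> 0 < eps ->
  exists m0, forall m, (m0 <= m)%N ->
  `|(\sum_(i < t.+1) 'C(t * ((p ^ m - 1) %/ (p - 1)), i) * k ^ i)%N%:R / (p ^ m)%:R ^+ t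
     - ((t * k) ^ t)%N%:R / (t`! * (p - 1) ^ t)%N%:R| < eps.
Proof.
move=> t_gt0 k_gt0 p_gt1 eps_gt0.
pose K := (t * (t * k) ^ t.-1 * t`! * (p - 1) ^ t + (t * k) ^ t * t * p)%N.
exists (Num.bound (K%:R / eps)).+1 => m m_large.
have m_gt0 : (0 < m)%N := leq_ltn_trans (leq0n _) m_large.
have p_le_pm : (p <= p ^ m)%N := leq_pexp2l (ltnW p_gt1) m_gt0.
have K_lt : K%:R / eps < (p ^ m)%:R.
  apply: lt_trans (archi_boundP _) _; first by rewrite divr_ge0 ?ler0n ?ltW.
  by rewrite ltr_nat; apply: ltn_trans m_large (ltn_expl m p_gt1).
have upper := binomial_sum_upper t_gt0 k_gt0 p_gt1 (pred_exp_divnK p m) p_le_pm.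
have lower := binomial_sum_lower t_gt0 k_gt0 p_gt1 (pred_exp_divnK p m) p_le_pm.
set A := (\sum_(i < t.+1) _)%N in upper lower *.
have dist : `|A%:R / ((p ^ m) ^ t)%:R - ((t * k) ^ t)%:R / (t`! * (p - 1) ^ t)%:R|
    <= K%:R / (p ^ m)%:R :> rat.
  apply: (@dist_ratio_le _ A ((t * k) ^ t) (t`! * (p - 1) ^ t) (p ^ m) t K).
  - by rewrite muln_gt0 fact_gt0 expn_gt0 subn_gt0 p_gt1.
  - by rewrite expn_gt0 ltnW.
  - exact: t_gt0.
  - rewrite mulnA; apply: leq_trans upper _.
    exact: leq_add (leqnn _) (leq_mul (leq_addr _ _) (leqnn _)).
  - apply: leq_trans lower _; rewrite mulnA.
    exact: leq_add (leqnn _) (leq_mul (leq_addl _ _) (leqnn _)).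
rewrite -natrX; apply: le_lt_trans dist _.
have pm_gt0 : 0 < (p ^ m)%:R :> rat by rewrite ltr0n expn_gt0 ltnW.
by rewrite ltr_pdivrMr // mulrC -ltr_pdivrMr.
Qed.

Lemma card_axes_digit_one_set p m t : prime p -> (0 < m)%N ->
  #|axes_set t (digit_one_set p m)| = (t * ((p ^ m - 1) %/ (p - 1)))%N.
Proof.
move=> p_pr m_gt0; rewrite card_axes_set ?digit_one_set_neq0 //.
by rewrite -(card_digit_one_set p_pr m_gt0) mulKn // subn_gt0 prime_gt1.
Qed.

Lemma diamond_cover_axes_digit_one_set p m t kp km :
  prime p -> (0 < m)%N -> (p <= kp + km + 1)%N ->
  diamond_cover (intv_star (- km%:Z) kp%:Z) t (axes_set t (digit_one_set p m)).
Proof.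
move=> p_pr m_gt0 p_le; apply: diamond_cover_axes_set => x.
exact: Zp_intv_star_decomp.
Qed.

Lemma density_denominator t p m : (0 < t)%N -> (0 < p)%N ->
  ((t * ((p ^ m - 1) %/ (p - 1)) * (p - 1))%N%:R / t%:R + 1 : rat) = (p ^ m)%:R.
Proof.
move=> t_gt0 p_gt0; rewrite -mulnA pred_exp_divnK natrM mulrC mulrA.
rewrite mulVf ?pnatr_eq0 -?lt0n //.
by rewrite mul1r natrB ?expn_gt0 ?p_gt0 // subrK.
Qed.

Theorem corollary11 (kp km t : nat) :
  (km <= kp)%N -> (0 < kp + km)%N -> (0 < t)%N ->
  let p := psibar (kp + km + 1) in
  let nn := fun m : nat => (t * ((p ^ m - 1) %/ (p - 1)))%N in
  let delta := fun m : nat =>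
    ((\sum_(i < t.+1) 'C(nn m, i) * (kp + km) ^ i)%N%:R : rat)
      / (((nn m * (p - 1))%N%:R / t%:R + 1) ^+ t) in
  (forall m : nat, (0 < m)%N ->
     (exists S : {set 'rV['Z_(p ^ m)]_t},
        #|S| = nn m /\ diamond_cover (intv_star (- km%:Z) kp%:Z) t S) /\
     (exists L : 'rV[int]_(nn m) -> Prop,
        lattice_covering L (ballB (nn m) t kp km) /\
        has_density L (ballB (nn m) t kp km) (delta m))) /\
  (forall eps : rat, 0 < eps -> exists m0 : nat, forall m : nat, (m0 <= m)%N ->
     `| delta m - ((t * (kp + km)) ^ t)%N%:R / ((t `! * (p - 1) ^ t)%N%:R) | < eps).
Proof.
move=> _ k_gt0 t_gt0 p nn delta.
have [p_pr p_le] : prime p /\ (p <= kp + km + 1)%N.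
  by apply: psibar_prime_le; rewrite addn1 ltnS.
have p_gt0 := prime_gt0 p_pr.
split=> [m m_gt0 | eps eps_gt0]; last first.
  have [m0 conv] := binomial_sum_ratio_limit t_gt0 k_gt0 (prime_gt1 p_pr) eps_gt0.
  by exists m0 => m /conv; rewrite /delta /nn density_denominator.
have S_card := card_axes_digit_one_set t p_pr m_gt0.
have S_cover := diamond_cover_axes_digit_one_set (t := t) p_pr m_gt0 p_le.
split; first by eexists; split; [exact: S_card | exact: S_cover].
have M_bounded c : intv_star (- km%:Z) kp%:Z c -> - km%:Z <= c <= kp%:Z by case/andP.
have [L [L_cover L_index]] := diamond_cover_lattice S_card M_bounded S_cover.
exists L; split=> //.
exists (\sum_(i < t.+1) 'C(nn m, i) * (kp + km) ^ i)%N, #|'rV['Z_(p ^ m)]_t|.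
split; first exact: pcard_ballB.
split=> //; rewrite /delta /nn density_denominator // card_mx card_ord Zp_cast.
  by rewrite -natrX mul1n.
by rewrite -(expn0 p) ltn_exp2l ?prime_gt1.
Qed.
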